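(* Let $\Lambda=\{\Lambda_\omega\in B(\mathcal H,\mathcal K_\omega):\omega\in\Omega\}$ and $\Theta=\{\Theta_\omega\in B(\mathcal H,\mathcal K_\omega):\omega\in\Omega\}$ be strongly disjoint continuous $g$-frames for $\mathcal H$, and let $L_1,L_2\in B(\mathcal H)$ satisfy $L_1^*L_1+L_2^*L_2=AI$ for some $A>0$. Then $\{\Lambda_\omega L_1+\Theta_\omega L_2\in B(\mathcal H,\mathcal K_\omega):\omega\in\Omega\}$ is a continuous $g$-frame for $\mathcal H$. In particular, for $\alpha,\beta\in\mathbb C$ with $|\alpha|^2+|\beta|^2>0$, $\{\alpha\Lambda_\omega+\beta\Theta_\omega:\omega\in\Omega\}$ is a continuous $g$-frame for $\mathcal H$.
   Context: $\mathcal H$ is a complex Hilbert space, $(\Omega,\mu)$ a measure space with positive measure $\mu$, and $\{\mathcal K_\omega:\omega\in\Omega\}$ a family of complex Hilbert spaces. A map $F$ on $\Omega$ with $F(\omega)\in\mathcal K_\omega$ is strongly measurable if it is measurable as a map $\Omega\to\bigoplus_\omega\mathcal K_\omega$; $\widehat{\mathcal K}$ is the Hilbert space of strongly measurable such $F$ with $\int_\Omega\|F(\omega)\|^2d\mu<\infty$, inner product $\langle F,G\rangle=\int_\Omega\langle F(\omega),G(\omega)\rangle d\mu$. A family $\Lambda=\{\Lambda_\omega\in B(\mathcal H,\mathcal K_\omega)\}$ is a continuous $g$-frame for $\mathcal H$ if $\omega\mapsto\Lambda_\omega f$ is strongly measurable for each $f$ and there are $0<A\le B<\infty$ with $A\|f\|^2\le\int_\Omega\|\Lambda_\omega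 f\|^2d\mu(\omega)\le B\|f\|^2$ for all $f\in\mathcal H$. Its analysis operator $T_\Lambda^*:\mathcal H\to\widehat{\mathcal K}$ is $(T_\Lambda^*f)(\omega)=\Lambda_\omega f$. Two continuous $g$-frames $\Lambda,\Theta$ are strongly disjoint if $\mathrm{Range}\,T_\Lambda^*\perp\mathrm{Range}\,T_\Theta^*$ in $\widehat{\mathcal K}$. *)

From HB Require Import structures.
From mathcomp Require Import all_boot all_order all_algebra.
From mathcomp Require Import all_classical all_reals all_analysis.
From mathcomp Require Import complex.
Set Implicit Arguments. Unset Strict Implicit. Unset Printing Implicit Defensive.
Import Order.TTheory GRing.Theory Num.Theory.
Local Open Scope classical_set_scope.
Local Open Scope ring_scope.

Section Hilbert.
Variable R : realType.

Record hilbert := Hilbert {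
  hcarrier :> lmodType R[i];
  hinner : hcarrier -> hcarrier -> R[i];
  hinner_linear : forall (a : R[i]) (x y z : hcarrier),
      hinner (a *: x + y) z = a * hinner x z + hinner y z;
  hinner_conj : forall x y : hcarrier, hinner y x = conjc (hinner x y);
  hinner_ge0 : forall x : hcarrier, 0 <= complex.Re (hinner x x);
  hinner_definite : forall x : hcarrier, hinner x x = 0 -> x = 0;
  hcomplete : forall u : nat -> hcarrier,
      (forall e : R, 0 < e -> exists N, forall m n, (N <= m)%N -> (N <= n)%N ->
          Num.sqrt (complex.Re (hinner (u m - u n) (u m - u n))) < e) ->
      exists x : hcarrier, forall e : R, 0 < e -> exists N, forall n, (N <= n)%N ->
          Num.sqrt (complex.Re (hinner (u n - x) (u n - x))) < e
}.

Definition inner (H : hilbert) (x y : H) : R[i] := hinner x y.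
Definition hnorm (H : hilbert) (x : H) : R := Num.sqrt (complex.Re (inner x x)).

Definition bounded_op (H K : hilbert) (T : H -> K) : Prop :=
  (forall (a : R[i]) (x y : H), T (a *: x + y) = a *: T x + T y) /\
  exists M : R, forall x : H, hnorm (T x) <= M * hnorm x.

Definition is_adjoint (H K : hilbert) (T : H -> K) (S : K -> H) : Prop :=
  forall (x : H) (y : K), inner (T x) y = inner x (S y).

Section DirectSum.
Context {d : measure_display} {Omega : measurableType d}.
Variable K : Omega -> hilbert.

(* elements of ⊕_ω K_ω : dependent functions with Σ_ω ‖x ω‖² < ∞ *)
Definition dsum_elt (x : forall w, K w) : Prop :=
  (\esum_(w in [set: Omega]) ((hnorm (x w)) ^+ 2)%:E < +oo)%E.

Definition dsum_dist2 (x y : forall w, K w) : \bar R :=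
  (\esum_(w in [set: Omega]) ((hnorm (x w - y w)) ^+ 2)%:E)%E.

Definition dsum_open (U : (forall w, K w) -> Prop) : Prop :=
  forall x, dsum_elt x -> U x -> exists e : R, 0 < e /\
    forall y, dsum_elt y -> (dsum_dist2 x y < (e ^+ 2)%:E)%E -> U y.

Definition dsum_inj (w : Omega) (v : K w) : forall w', K w' :=
  fun w' => match pselect (w = w') with
            | left e => eq_rect w (fun t => (K t : Type)) v w' e
            | right _ => 0
            end.

(* F with F ω ∈ K_ω is strongly measurable: measurable as a map Ω → ⊕_ω K_ω *)
Definition strongly_measurable (F : forall w, K w) : Prop :=
  forall U, dsum_open U -> measurable [set w | U (dsum_inj (F w))].

Variable mu : {measure set Omega -> \bar R}.

Definition hatK_inner (F G : forall w, K w) : R[i] :=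
  Complex (\int[mu]_w complex.Re (inner (F w) (G w)))%R
          (\int[mu]_w complex.Im (inner (F w) (G w)))%R.

Definition cont_gframe (H : hilbert) (Lam : forall w, H -> K w) : Prop :=
  (forall w, bounded_op (Lam w)) /\
  (forall f : H, strongly_measurable (fun w => Lam w f)) /\
  exists A B : R, 0 < A /\ A <= B /\ forall f : H,
    ((A * hnorm f ^+ 2)%:E <= \int[mu]_w ((hnorm (Lam w f)) ^+ 2)%:E)%E /\
    (\int[mu]_w ((hnorm (Lam w f)) ^+ 2)%:E <= (B * hnorm f ^+ 2)%:E)%E.

(** strong disjointness: Range T_Λ^* ⟂ Range T_Θ^* in \hat K *)
Definition strongly_disjoint (H : hilbert) (Lam Theta : forall w, H -> K w) : Prop :=
  forall f g : H, hatK_inner (fun w => Lam w f) (fun w => Theta w g) = 0.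

End DirectSum.
End Hilbert.

(* With [F w := Lam w (L1 f)] and [G w := Theta w (L2 f)], strong
   disjointness kills the cross term of [∫ ‖F + G‖²], so
   [∫ ‖F + G‖² = ∫ ‖F‖² + ∫ ‖G‖²], which the two frame inequalities squeeze
   between [min(A1, A2)] and [max(B1, B2)] times
   [‖L1 f‖² + ‖L2 f‖² = ⟨(L1* L1 + L2* L2) f, f⟩ = A ‖f‖²].
   The scalar case is [L1 = α], [L2 = β], [A = |α|² + |β|²]. *)

From HB Require Import structures.
From mathcomp Require Import all_boot all_order all_algebra.
From mathcomp Require Import all_classical all_reals all_analysis.
From mathcomp Require Import complex.
From mathcomp Require Import ring lra measurable_realfun.
Import Order.TTheory GRing.Theory Num.Theory.
Local Open Scope classical_set_scope.
Local Open Scope ring_scope.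

Section InnerProduct.
Context {R : realType} {H : hilbert R}.
Implicit Types (x y z : H) (a : R[i]).

Lemma innerDl x y z : inner (x + y) z = inner x z + inner y z.
Proof. by have := hinner_linear 1 x y z; rewrite scale1r mul1r. Qed.

Lemma inner0l z : inner (0 : H) z = 0.
Proof. by apply: (addrI (inner (0 : H) z)); rewrite -innerDl !addr0. Qed.

Lemma innerZl a x z : inner (a *: x) z = a * inner x z.
Proof.
rewrite /inner; have := hinner_linear a x 0 z; rewrite addr0 => ->.
by rewrite -[hinner 0 z]/(inner 0 z) inner0l addr0.
Qed.

Lemma innerNl x z : inner (- x) z = - inner x z.
Proof. by rewrite -scaleN1r innerZl mulN1r. Qed.

Lemma innerC x y : inner y x = conjc (inner x y).
Proof. exact: hinner_conj. Qed.

Lemma innerDr x y z : inner x (y + z) = inner x y + inner x z.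
Proof. by rewrite innerC innerDl rmorphD [inner x y]innerC [inner x z]innerC. Qed.

Lemma innerZr a x y : inner x (a *: y) = conjc a * inner x y.
Proof. by rewrite innerC innerZl rmorphM [inner x y]innerC. Qed.

Lemma innerNr x z : inner x (- z) = - inner x z.
Proof. by rewrite innerC innerNl rmorphN [inner x z]innerC. Qed.

Lemma Im_inner_self x : complex.Im (inner x x) = 0.
Proof. by have := innerC x x; case: (inner x x) => a b /= [] b_opp; lra. Qed.

Lemma hnorm_ge0 x : 0 <= hnorm x.
Proof. exact: sqrtr_ge0. Qed.

Lemma sqr_hnorm x : hnorm x ^+ 2 = complex.Re (inner x x).
Proof. by rewrite sqr_sqrtr // hinner_ge0. Qed.

Lemma hnorm0 : hnorm (0 : H) = 0.
Proof. by rewrite /hnorm inner0l sqrtr0. Qed.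

Lemma hnorm_eq0 x : hnorm x = 0 -> x = 0.
Proof.
move=> x0; apply: hinner_definite.
have := Im_inner_self x; have := sqr_hnorm x; rewrite x0 expr0n /=.
by rewrite /inner; case: (hinner x x) => a b /= <- ->.
Qed.

Lemma hnorm_gt0 x : x <> 0 -> 0 < hnorm x.
Proof.
move=> x0; rewrite lt_neqAle hnorm_ge0 andbT eq_sym.
by apply/eqP => /hnorm_eq0.
Qed.

Lemma sqr_hnormD x y : hnorm (x + y) ^+ 2 =
  hnorm x ^+ 2 + hnorm y ^+ 2 + 2 * complex.Re (inner x y).
Proof.
rewrite !sqr_hnorm innerDl !innerDr (innerC x y).
by case: (inner x x) (inner y y) (inner x y) => [? ?] [? ?] [? ?] /=; ring.
Qed.

Lemma hnormN x : hnorm (- x) = hnorm x.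
Proof. by rewrite /hnorm innerNl innerNr opprK. Qed.

Lemma Re_inner_le x y :
  `|2 * complex.Re (inner x y)| <= hnorm x ^+ 2 + hnorm y ^+ 2.
Proof.
have := sqr_hnormD x y; have := sqr_hnormD x (- y).
rewrite hnormN innerNr.
have := sqr_ge0 (hnorm (x + y)); have := sqr_ge0 (hnorm (x - y)).
case: (inner x y) => r s /= *; rewrite ler_norml; apply/andP; split; lra.
Qed.

Lemma hnormD_le x y : hnorm (x + y) <= 2 * (hnorm x + hnorm y).
Proof.
have := sqr_hnormD x y; have := Re_inner_le x y; rewrite ler_norml => /andP[_].
have := hnorm_ge0 x; have := hnorm_ge0 y; have := hnorm_ge0 (x + y).
move=> *; rewrite -(ler_pXn2r (_ : 0 < 2)%N) ?nnegrE //; nra.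
Qed.

Lemma hnormZ a x :
  hnorm (a *: x) = Num.sqrt (complex.Re a ^+ 2 + complex.Im a ^+ 2) * hnorm x.
Proof.
rewrite /hnorm innerZl innerZr -sqrtrM; last by rewrite addr_ge0 ?sqr_ge0.
have := Im_inner_self x; case: a (inner x x) => p q [r s] /= ->.
by congr Num.sqrt; ring.
Qed.

End InnerProduct.

Section BoundedOperators.
Context {R : realType}.
Implicit Types H K L : hilbert R.

Lemma bounded_op_scale {H K} {T : H -> K} : bounded_op T ->
  forall a x, T (a *: x) = a *: T x.
Proof.
move=> [linT _] a x; have T0 : T 0 = 0.
  have := linT 1 0 0; rewrite addr0 !scale1r => T00.
  by apply: (addrI (T 0)); rewrite addr0 -T00.
by have := linT a x 0; rewrite !addr0 T0 addr0.
Qed.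

Lemma bounded_op_bound {H K} {T : H -> K} : bounded_op T ->
  exists2 M : R, 0 <= M & forall x, hnorm (T x) <= M * hnorm x.
Proof.
move=> [_ [M TM]]; exists `|M| => // x; apply: le_trans (TM x) _.
by rewrite ler_wpM2r ?hnorm_ge0 ?ler_norm.
Qed.

Lemma bounded_op_comp {H K L} (S : K -> L) (T : H -> K) :
  bounded_op S -> bounded_op T -> bounded_op (fun x => S (T x)).
Proof.
move=> bS bT; have [linS _] := bS; have [linT _] := bT.
have [MS MS0 SM] := bounded_op_bound bS; have [MT _ TM] := bounded_op_bound bT.
split; first by move=> a x y; rewrite linT linS.
exists (MS * MT) => x; rewrite -mulrA; apply: le_trans (SM _) _.
exact: ler_wpM2l.
Qed.

Lemma bounded_opD {H K} (S T : H -> K) :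
  bounded_op S -> bounded_op T -> bounded_op (fun x => S x + T x).
Proof.
move=> bS bT; have [linS _] := bS; have [linT _] := bT.
have [MS _ SM] := bounded_op_bound bS; have [MT _ TM] := bounded_op_bound bT.
split; first by move=> a x y; rewrite linS linT scalerDr addrACA.
exists (2 * (MS + MT)) => x; apply: le_trans (hnormD_le _ _) _.
by rewrite -mulrA; apply: ler_wpM2l => //; rewrite mulrDl lerD.
Qed.

Lemma bounded_op_scaler {H} (a : R[i]) : bounded_op (fun x : H => a *: x).
Proof.
split; first by move=> b x y; rewrite scalerDr !scalerA mulrC.
by exists (Num.sqrt (complex.Re a ^+ 2 + complex.Im a ^+ 2)) => x; rewrite hnormZ.
Qed.

Lemma scale_conjc_scale {V : lmodType R[i]} (a : R[i]) (x : V) :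
  conjc a *: (a *: x) = `|a| ^+ 2 *: x.
Proof. by rewrite scalerA mulrC sqr_normc. Qed.

Lemma is_adjoint_scaler {H} (a : R[i]) :
  is_adjoint (fun x : H => a *: x) (fun x : H => conjc a *: x).
Proof. by move=> x y; rewrite innerZl innerZr conjcK. Qed.

Lemma sqr_hnorm_adjoint_sum {H K1 K2} {L1 : H -> K1} {L2 : H -> K2} {L1s L2s}
    {A : R} f :
  is_adjoint L1 L1s -> is_adjoint L2 L2s ->
  (forall g, L1s (L1 g) + L2s (L2 g) = (A%:C)%C *: g) ->
  hnorm (L1 f) ^+ 2 + hnorm (L2 f) ^+ 2 = A * hnorm f ^+ 2.
Proof.
move=> adj1 adj2 sumA; rewrite !sqr_hnorm adj1 adj2.
have -> (u v : R[i]) : complex.Re u + complex.Re v = complex.Re (u + v).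
  by case: u v => [? ?] [? ?].
rewrite -innerDr sumA innerZr.
by have := Im_inner_self f; case: (inner f f) => r s /= ->; ring.
Qed.

End BoundedOperators.

Section StrongMeasurability.
Context {R : realType} {d : measure_display} {Omega : measurableType d}.
Context {K : Omega -> hilbert R}.
Implicit Types F G : forall w, K w.

Definition support F := [set w | F w <> 0].

Definition hereditarily_measurable (Z : set Omega) :=
  forall S, S `<=` Z -> measurable S.

Lemma dsum_inj_self w (v : K w) : dsum_inj v w = v.
Proof.
rewrite /dsum_inj; case: (pselect (w = w)) => [e|]; last by [].
by rewrite (Prop_irrelevance e (erefl w)).
Qed.

Lemma dsum_inj_neq w w' (v : K w) : w <> w' -> dsum_inj v w' = 0.
Proof. by rewrite /dsum_inj; case: (pselect (w = w')). Qed.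

Lemma dsum_inj0 w : dsum_inj (0 : K w) = (fun w' => 0).
Proof.
apply: functional_extensionality_dep => w'.
by rewrite /dsum_inj; case: (pselect (w = w')) => // e; case: w' / e.
Qed.

Lemma measurable_constant_off {Z P : set Omega} : hereditarily_measurable Z ->
  (forall w, ~ Z w -> P w) \/ (forall w, ~ Z w -> ~ P w) -> measurable P.
Proof.
move=> mZ P_off; rewrite -[P]setIT -(setUv Z) setIUr.
apply: measurableU; first by apply: mZ => w [].
case: P_off => P_off.
- suff -> : P `&` ~` Z = ~` Z by apply/measurableC/mZ.
  by apply/seteqP; split => w; [case|move=> Zw; split => //; exact: P_off].
- suff -> : P `&` ~` Z = set0 by [].
  by apply/seteqP; split => w // [Pw /P_off].
Qed.

(* The set of [x] with [x w <> 0] for some [w] in [S] is open in the direct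
   sum, whose distance dominates each coordinate. *)
Lemma strongly_measurableP F :
  strongly_measurable F <-> hereditarily_measurable (support F).
Proof.
split=> [mF S SF|mF U _].
- pose U (x : forall w, K w) := exists2 w, S w & x w <> 0.
  suff -> : S = [set w | U (dsum_inj (F w))].
    apply: mF => x _ [w Sw xw]; exists (hnorm (x w)); split; first exact: hnorm_gt0.
    move=> y _ xy; exists w => // yw0; move: xy; apply/negP; rewrite -leNgt.
    rewrite /dsum_dist2 (esumID [set w]); last by move=> i _; rewrite lee_fin sqr_ge0.
    rewrite setTI esum_set1 ?lee_fin ?sqr_ge0 // yw0 subr0 leeDl //.
    by apply: esum_ge0 => i _; rewrite lee_fin sqr_ge0.
  apply/seteqP; split => w /=.
  + by move=> Sw; exists w => //; rewrite dsum_inj_self; exact: SF.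
  + move=> [w' Sw' Fw']; have [->//|ww'] := pselect (w = w').
    by rewrite dsum_inj_neq in Fw'.
- apply: (measurable_constant_off mF).
  have [U0|U0] := pselect (U (fun w' => 0)); [left|right] => w;
    by move=> /contrapT /= ->; rewrite dsum_inj0.
Qed.

Lemma strongly_measurableD F G : strongly_measurable F -> strongly_measurable G ->
  strongly_measurable (fun w => F w + G w).
Proof.
move=> /strongly_measurableP mF /strongly_measurableP mG.
apply/strongly_measurableP => S SFG.
rewrite -[S]setIT -(setUv (support F)) setIUr.
apply: measurableU; first by apply: mF => w [].
apply: mG => w [/SFG FG0 /contrapT F0] G0.
by move: FG0; rewrite /support /= F0 G0 addr0.
Qed.

Lemma measurable_fun_support {d'} {T : measurableType d'} {F} {f : Omega -> T} (c : T) :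
  strongly_measurable F -> (forall w, F w = 0 -> f w = c) -> measurable_fun setT f.
Proof.
move=> /strongly_measurableP mF fc _ Y _; rewrite setTI.
apply: (measurable_constant_off mF).
have [Yc|Yc] := pselect (Y c); [left|right] => w;
  by move=> /contrapT /fc; rewrite /preimage /= => ->.
Qed.

End StrongMeasurability.

Section NullCrossTerm.
Context {d : measure_display} {T : measurableType d} {R : realType}.
Variable mu : {measure set T -> \bar R}.

Lemma integral_add_null (f c : T -> R) (k : R) :
  measurable_fun setT (EFin \o f) -> measurable_fun setT (EFin \o c) ->
  (forall w, `|c w| <= f w) -> (\int[mu]_w (f w)%:E < +oo)%E ->
  Rintegral mu setT c = 0 ->
  (\int[mu]_w (f w + k * c w)%:E = \int[mu]_w (f w)%:E)%E.
Proof.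
move=> mf mc cf finf c0.
have f0 w : 0 <= f w by apply: le_trans (cf w).
have fi : mu.-integrable setT (fun w => (f w)%:E).
  apply/integrableP; split => //.
  by under eq_integral => w _ do rewrite gee0_abs ?lee_fin //.
have ci : mu.-integrable setT (fun w => (c w)%:E).
  apply: le_integrable fi => //= w _.
  by rewrite lee_fin (ger0_norm (f0 w)).
under eq_integral => w _ do rewrite EFinD EFinM.
rewrite integralD //; last by apply: integrableZl.
rewrite integralZl // -[X in (_ * X)%E]fineK ?integrable_fin_num //.
by move: c0; rewrite /Rintegral => ->; rewrite mule0 adde0.
Qed.

End NullCrossTerm.

Section ContinuousGFrames.
Context {R : realType} {d : measure_display} {Omega : measurableType d}.
Context {mu : {measure set Omega -> \bar R}} {K : Omega -> hilbert R}.
Implicit Types F G : forall w, K w.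

Lemma integral_sqr_hnormD {F G} : strongly_measurable F -> strongly_measurable G ->
  (\int[mu]_w (hnorm (F w) ^+ 2)%:E < +oo)%E ->
  (\int[mu]_w (hnorm (G w) ^+ 2)%:E < +oo)%E ->
  Rintegral mu setT (fun w => complex.Re (inner (F w) (G w))) = 0 ->
  (\int[mu]_w (hnorm (F w + G w) ^+ 2)%:E =
   \int[mu]_w (hnorm (F w) ^+ 2)%:E + \int[mu]_w (hnorm (G w) ^+ 2)%:E)%E.
Proof.
move=> mF mG finF finG FG0.
have mF2 : measurable_fun setT (EFin \o fun w => hnorm (F w) ^+ 2).
  by apply: (measurable_fun_support 0%E mF) => w /= ->; rewrite hnorm0 expr0n.
have mG2 : measurable_fun setT (EFin \o fun w => hnorm (G w) ^+ 2).
  by apply: (measurable_fun_support 0%E mG) => w /= ->; rewrite hnorm0 expr0n.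
have sumD : (\int[mu]_w (hnorm (F w) ^+ 2 + hnorm (G w) ^+ 2)%:E =
    \int[mu]_w (hnorm (F w) ^+ 2)%:E + \int[mu]_w (hnorm (G w) ^+ 2)%:E)%E.
  by under eq_integral => w _ do rewrite EFinD; rewrite ge0_integralD // => w _;
    rewrite lee_fin sqr_ge0.
under eq_integral => w _ do rewrite sqr_hnormD.
rewrite integral_add_null //.
- apply/measurable_EFinP/measurable_funD; exact/measurable_EFinP.
- by apply: (measurable_fun_support 0%E mF) => w /= ->; rewrite inner0l.
- move=> w; have := Re_inner_le (F w) (G w).
  rewrite normrM ger0_norm //; have := normr_ge0 (complex.Re (inner (F w) (G w))).
  lra.
- by rewrite sumD lte_add_pinfty.
Qed.

Lemma cont_gframe_combination {H : hilbert R} {Lam Theta : forall w, H -> K w}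
    {L1 L2 L1s L2s : H -> H} {A : R} :
  cont_gframe mu Lam -> cont_gframe mu Theta -> strongly_disjoint mu Lam Theta ->
  bounded_op L1 -> bounded_op L2 -> is_adjoint L1 L1s -> is_adjoint L2 L2s ->
  0 < A -> (forall f, L1s (L1 f) + L2s (L2 f) = (A%:C)%C *: f) ->
  cont_gframe mu (fun w f => Lam w (L1 f) + Theta w (L2 f)).
Proof.
move=> [bLam [mLam [A1 [B1 [A1_gt0 [A1B1 frameLam]]]]]].
move=> [bTheta [mTheta [A2 [B2 [A2_gt0 [A2B2 frameTheta]]]]]].
move=> disj bL1 bL2 adj1 adj2 A_gt0 sumA.
split; [|split].
- by move=> w; apply: bounded_opD; apply: bounded_op_comp.
- by move=> f; apply: strongly_measurableD.
exists (Num.min A1 A2 * A), (Num.max B1 B2 * A).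
split; first by rewrite mulr_gt0 // lt_min A1_gt0.
split; first by rewrite ler_pM2r // ge_min le_max A1B1.
move=> f; have [lo1 up1] := frameLam (L1 f); have [lo2 up2] := frameTheta (L2 f).
have finite_bound (x : \bar R) (b : R) : (x <= b%:E)%E -> (x < +oo)%E.
  by move=> /le_lt_trans; apply; exact: ltry.
rewrite (integral_sqr_hnormD (mLam (L1 f)) (mTheta (L2 f)) (finite_bound _ _ up1)
  (finite_bound _ _ up2)); last by move: (congr1 (@complex.Re R) (disj (L1 f) (L2 f))).
have normsA := sqr_hnorm_adjoint_sum f adj1 adj2 sumA.
have L1f_ge0 := sqr_ge0 (hnorm (L1 f)); have L2f_ge0 := sqr_ge0 (hnorm (L2 f)).
have minA1 : Num.min A1 A2 <= A1 by rewrite ge_min lexx.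
have minA2 : Num.min A1 A2 <= A2 by rewrite ge_min lexx orbT.
have maxB1 : B1 <= Num.max B1 B2 by rewrite le_max lexx.
have maxB2 : B2 <= Num.max B1 B2 by rewrite le_max lexx orbT.
split.
- by apply: le_trans (leeD lo1 lo2); rewrite -EFinD lee_fin; nra.
- by apply: le_trans (leeD up1 up2) _; rewrite -EFinD lee_fin; nra.
Qed.

End ContinuousGFrames.

Theorem proposition2p6 (R : realType) (d : measure_display) (Omega : measurableType d)
  (mu : {measure set Omega -> \bar R}) (H : hilbert R) (K : Omega -> hilbert R)
  (Lam Theta : forall w, H -> K w) :
  cont_gframe mu Lam -> cont_gframe mu Theta -> strongly_disjoint mu Lam Theta ->
  (forall (L1 L2 : H -> H) (L1s L2s : H -> H) (A : R),
      bounded_op L1 -> bounded_op L2 ->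
      is_adjoint L1 L1s -> is_adjoint L2 L2s ->
      0 < A -> (forall f : H, L1s (L1 f) + L2s (L2 f) = (A%:C)%C *: f) ->
      cont_gframe mu (fun w (f : H) => Lam w (L1 f) + Theta w (L2 f))) /\
  (forall alpha beta : R[i],
      0 < `|alpha| ^+ 2 + `|beta| ^+ 2 ->
      cont_gframe mu (fun w (f : H) => alpha *: Lam w f + beta *: Theta w f)).
Proof.
move=> frameLam frameTheta disj.
split=> [L1 L2 L1s L2s A|alpha beta ab_gt0]; first exact: cont_gframe_combination.
pose A := complex.Re alpha ^+ 2 + complex.Im alpha ^+ 2 +
  (complex.Re beta ^+ 2 + complex.Im beta ^+ 2).
have AE : (A%:C)%C = `|alpha| ^+ 2 + `|beta| ^+ 2.
  by rewrite -!add_Re2_Im2; simpc.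
have A_gt0 : 0 < A by rewrite -ltcR AE.
have sumA (f : H) :
    conjc alpha *: (alpha *: f) + conjc beta *: (beta *: f) = (A%:C)%C *: f.
  by rewrite !scale_conjc_scale AE scalerDl.
have [[bLam _] [bTheta _]] := (frameLam, frameTheta).
suff -> : (fun w f => alpha *: Lam w f + beta *: Theta w f) =
          (fun w f => Lam w (alpha *: f) + Theta w (beta *: f)).
  exact: cont_gframe_combination frameLam frameTheta disj
    (bounded_op_scaler alpha) (bounded_op_scaler beta)
    (is_adjoint_scaler alpha) (is_adjoint_scaler beta) A_gt0 sumA.
apply: functional_extensionality_dep => w; apply: functional_extensionality_dep => f.
by rewrite (bounded_op_scale (bLam w)) (bounded_op_scale (bTheta w)).
Qed.
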